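(* Let $K$ be a field of characteristic zero and $x$ a free variable. Let $\delta$ be an arbitrary $K$-derivation or an arbitrary $K$-$\mathcal{E}$-derivation of $K[x]$. Then the image $\operatorname{Im}\delta=\delta(K[x])$ is a Mathieu subspace of $K[x]$.
   Context: A $K$-derivation of a commutative $K$-algebra $\mathcal{A}$ is a $K$-linear map $D:\mathcal{A}\to\mathcal{A}$ with $D(ab)=D(a)b+aD(b)$. A $K$-$\mathcal{E}$-derivation of $\mathcal{A}$ is a $K$-linear map $\delta:\mathcal{A}\to\mathcal{A}$ with $\delta(ab)=\delta(a)b+a\delta(b)-\delta(a)\delta(b)$ for all $a,b$; equivalently $\delta=\mathrm{id}-\phi$ for some $K$-algebra endomorphism $\phi$ of $\mathcal{A}$. A $K$-subspace $V$ of a commutative $K$-algebra $\mathcal{A}$ is a Mathieu subspace (Mathieu–Zhao space) if for all $a,b\in\mathcal{A}$ with $a^m\in V$ for all $m\ge 1$, one has $a^mb\in V$ for all $m\gg 0$. *)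

From HB Require Import structures.
From mathcomp Require Import all_boot all_order all_algebra.
Set Implicit Arguments. Unset Strict Implicit. Unset Printing Implicit Defensive.
Import GRing.Theory.
Local Open Scope ring_scope.

Definition poly_Klinear (K : fieldType) (f : {poly K} -> {poly K}) : Prop :=
  forall (c : K) (a b : {poly K}), f (c *: a + b) = c *: f a + f b.

Definition is_Kderivation (K : fieldType) (D : {poly K} -> {poly K}) : Prop :=
  poly_Klinear D /\ forall a b : {poly K}, D (a * b) = D a * b + a * D b.

Definition is_KEderivation (K : fieldType) (d : {poly K} -> {poly K}) : Prop :=
  poly_Klinear d /\
  forall a b : {poly K}, d (a * b) = d a * b + a * d b - d a * d b.

Definition is_Ksubspace (K : fieldType) (V : {poly K} -> Prop) : Prop :=
  V 0 /\ forall (c : K) (a b : {poly K}), V a -> V b -> V (c *: a + b).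

Definition is_Mathieu_subspace (K : fieldType) (V : {poly K} -> Prop) : Prop :=
  is_Ksubspace V /\
  forall a b : {poly K}, (forall m : nat, (1 <= m)%N -> V (a ^+ m)) ->
    exists N : nat, forall m : nat, (N <= m)%N -> V (a ^+ m * b).

Definition image_of (K : fieldType) (f : {poly K} -> {poly K}) : {poly K} -> Prop :=
  fun p => exists q, f q = p.

(* A K-derivation is D = D('X) * d/dx, and d/dx is onto in characteristic
   zero, so Im D is the ideal generated by D('X).  A K-E-derivation is
   id - phi with phi an algebra endomorphism, so either phi = 0 and
   Im = K[x], or phi is composition with h := phi('X) and Im = {q - q o h}.
   If deg h <= 1, a translation to a fixed point of h conjugates h to
   lambda x, for which Im is cut out by coefficient conditions: it is an
   ideal, or (lambda a root of unity) no nonzero a has all its powers in Im;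
   when h = x + mu with mu <> 0 instead, Im = K[x].  If deg h >= 2, let h_i
   be the iterates of h.  Telescoping shows that if all powers of a lie in
   Im, the power sums of a o h_0, ..., a o h_(n-1) vanish modulo h_n - x, so
   by Newton's identities a^n is divisible by h_n - x, of degree (deg h)^n;
   for n large this forces a = 0.  Ideals, and subspaces in which no nonzero
   element has all its powers, are Mathieu subspaces. *)

From mathcomp Require Import all_boot all_order all_algebra.
From mathcomp Require Import ring zify.
From Stdlib Require Import Classical.
Set Implicit Arguments.
Unset Strict Implicit.
Unset Printing Implicit Defensive.
Import GRing.Theory.
Local Open Scope ring_scope.

Section NewtonNilpotence.
Variable R : comNzRingType.
Implicit Types (b c : R) (F G : {poly R}) (r : seq R).

(* The quotient of [F - F.[b]] by ['X - b], written so that its coefficients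
   are visibly polynomial in [b]. *)
Definition quotXsubC b F : {poly R} :=
  \sum_(t < size F) \sum_(i < t) (F`_t * b ^+ i)%:P * 'X^(t.-1 - i).

Lemma mul_XsubC_quot b F : ('X - b%:P) * quotXsubC b F = F - (F.[b])%:P.
Proof.
transitivity (\sum_(t < size F) F`_t *: 'X^t - (F.[b])%:P); last first.
  by rewrite -poly_def coefK.
rewrite /quotXsubC horner_coef rmorph_sum -sumrB mulr_sumr.
apply: eq_bigr => t _.
have -> : F`_t *: 'X^t - (F`_t * b ^+ t)%:P = (F`_t)%:P * ('X ^+ t - b%:P ^+ t).
  by rewrite mulrBr mul_polyC polyCM rmorphXn.
rewrite subrXX mulrCA; congr (_ * _); rewrite mulr_sumr; apply: eq_bigr => i _.
by rewrite polyCM rmorphXn; ring.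
Qed.

Lemma horner_prod_XsubC_mem r b :
  b \in r -> (\prod_(c <- r) ('X - c%:P)).[b] = 0.
Proof. by move=> rb; rewrite horner_prod (big_rem b rb) /= hornerXsubC subrr mul0r. Qed.

Lemma quotXsubC_mulXsubC b c G :
  quotXsubC b (('X - c%:P) * G) = ('X - c%:P) * quotXsubC b G + (G.[b])%:P.
Proof.
apply: (monic_lreg (monicXsubC b)); rewrite /= mul_XsubC_quot mulrDr mulrCA.
rewrite mul_XsubC_quot hornerM_comm ?hornerXsubC ?polyCM ?polyCB; last exact: mulrC.
by ring.
Qed.

Lemma sum_quotXsubC_prod r :
  \sum_(b <- r) quotXsubC b (\prod_(c <- r) ('X - c%:P)) =
  (\prod_(c <- r) ('X - c%:P))^`().
Proof.
elim: r => [|c r IH]; first by rewrite !big_nil derivC.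
rewrite !big_cons; set Q := \prod_(b <- r) ('X - b%:P).
have -> : quotXsubC c (('X - c%:P) * Q) = Q.
  apply: (monic_lreg (monicXsubC c)).
  rewrite /= mul_XsubC_quot hornerM_comm ?hornerXsubC; last exact: mulrC.
  by rewrite subrr mul0r subr0.
rewrite big_seq (eq_bigr (fun b => ('X - c%:P) * quotXsubC b Q)); last first.
  by move=> b rb; rewrite quotXsubC_mulXsubC horner_prod_XsubC_mem ?addr0.
by rewrite -big_seq -mulr_sumr IH derivM derivXsubC mul1r.
Qed.

Lemma sum_mul_quotXsubC r F :
  (forall m, (0 < m < size F)%N -> \sum_(b <- r) b ^+ m = 0) ->
  \sum_(b <- r) b%:P * quotXsubC b F = 0.
Proof.
move=> psum0; rewrite (eq_bigr (fun b => \sum_(t < size F) \sum_(i < t)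
   (F`_t * b ^+ i.+1)%:P * 'X^(t.-1 - i))); last first.
  move=> b _; rewrite mulr_sumr; apply: eq_bigr => t _.
  rewrite mulr_sumr; apply: eq_bigr => i _.
  by rewrite mulrA -polyCM exprS; congr (_%:P * _); ring.
rewrite exchange_big; apply: big1 => t _; rewrite exchange_big; apply: big1 => i _.
rewrite -mulr_suml -rmorph_sum -mulr_sumr psum0 ?mulr0 ?mul0r //=.
exact: leq_ltn_trans (ltn_ord i) (ltn_ord t).
Qed.

Lemma X_deriv_prod_XsubC r :
  (forall m, (0 < m <= size r)%N -> \sum_(b <- r) b ^+ m = 0) ->
  'X * (\prod_(b <- r) ('X - b%:P))^`() = \prod_(b <- r) ('X - b%:P) *+ size r.
Proof.
set Q := \prod_(b <- r) _ => psum0.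
have sizeQ : size Q = (size r).+1 by rewrite size_prod_XsubC.
rewrite -sum_quotXsubC_prod mulr_sumr big_seq.
rewrite (eq_bigr (fun b => Q + b%:P * quotXsubC b Q)); last first.
  move=> b rb; have := mul_XsubC_quot b Q; rewrite horner_prod_XsubC_mem // subr0.
  move=> QE; transitivity (('X - b%:P) * quotXsubC b Q + b%:P * quotXsubC b Q).
    by ring.
  by rewrite QE.
rewrite -big_seq big_split /= sum_mul_quotXsubC ?sizeQ // addr0.
by rewrite big_const_seq count_predT iter_addr_0.
Qed.

Lemma prod_XsubC_eq_Xn r :
  (forall k, (0 < k <= size r)%N -> GRing.lreg (k%:R : R)) ->
  (forall m, (0 < m <= size r)%N -> \sum_(b <- r) b ^+ m = 0) ->
  \prod_(b <- r) ('X - b%:P) = 'X^(size r).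
Proof.
move=> nreg psum0; set n := size r; set Q := \prod_(b <- r) _.
have euler : 'X * Q^`() = Q *+ n := X_deriv_prod_XsubC psum0.
have sizeQ : size Q = n.+1 by rewrite size_prod_XsubC.
have monQ : Q \is monic by exact: monic_prod_XsubC.
have coefQ l : (l < n)%N -> Q`_l = 0.
  move=> ln; have Ql : Q`_l *+ l = Q`_l *+ n.
    have := congr1 (coefp l) euler; rewrite /= coefXM coefMn.
    by case: l {ln} => [|l] /=; rewrite ?mulr0n // coef_deriv.
  apply: (nreg (n - l)%N); first by rewrite subn_gt0 ln leq_subr.
  by rewrite mulr0 mulr_natl mulrnBr ?Ql ?subrr // ltnW.
apply/polyP => l; rewrite coefXn.
case: (ltngtP l n) => [ln|nl|->]; first by rewrite coefQ.
  by rewrite nth_default // sizeQ.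
by have := monicP monQ; rewrite /lead_coef sizeQ.
Qed.

Lemma nilpotent_of_power_sums_eq0 r :
  (forall k, (0 < k <= size r)%N -> GRing.lreg (k%:R : R)) ->
  (forall m, (0 < m <= size r)%N -> \sum_(b <- r) b ^+ m = 0) ->
  forall b, b \in r -> b ^+ size r = 0.
Proof.
move=> nreg psum0 b rb.
by have := horner_prod_XsubC_mem rb; rewrite prod_XsubC_eq_Xn // hornerXn.
Qed.

End NewtonNilpotence.

Section MathieuCondition.
Variable R : comNzRingType.
Implicit Types V : R -> Prop.

Definition mathieu_cond V := forall a b : R,
  (forall m, (1 <= m)%N -> V (a ^+ m)) ->
  exists N : nat, forall m, (N <= m)%N -> V (a ^+ m * b).

Lemma mathieu_cond_ideal V : (forall a b, V a -> V (a * b)) -> mathieu_cond V.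
Proof. by move=> Videal a b Va; exists 1%N => m m1; apply/Videal/Va. Qed.

Lemma mathieu_cond_nil V :
  V 0 -> (forall a, (forall m, (1 <= m)%N -> V (a ^+ m)) -> a = 0) ->
  mathieu_cond V.
Proof.
move=> V0 Vnil a b /Vnil ->; exists 1%N => m m1.
by rewrite expr0n; case: m m1 => // m _; rewrite mul0r.
Qed.

End MathieuCondition.

Lemma mathieu_cond_rmorph (R S : comNzRingType) (f : {rmorphism R -> S})
    (V : R -> Prop) (W : S -> Prop) :
  (forall v, V v <-> W (f v)) -> mathieu_cond W -> mathieu_cond V.
Proof.
move=> VW MW a b Va; have [|N WN] := MW (f a) (f b).
  by move=> m m1; rewrite -rmorphXn -VW; exact: Va.
by exists N => m mN; rewrite VW rmorphM rmorphXn; exact: WN.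
Qed.

Section KlinearMaps.
Variables (K : fieldType) (f : {poly K} -> {poly K}).
Hypothesis f_lin : poly_Klinear f.

Lemma poly_Klinear0 : f 0 = 0.
Proof.
by apply: (addrI (f 0)); rewrite addr0 -{1}(scale1r (f 0)) -f_lin scale1r addr0.
Qed.

Lemma poly_KlinearD a b : f (a + b) = f a + f b.
Proof. by have := f_lin 1 a b; rewrite !scale1r. Qed.

Lemma poly_KlinearZ c a : f (c *: a) = c *: f a.
Proof. by rewrite -[c *: a]addr0 f_lin poly_Klinear0 addr0. Qed.

Lemma image_of_Ksubspace : is_Ksubspace (image_of f).
Proof.
split; first by exists 0; exact: poly_Klinear0.
by move=> c _ _ [a <-] [b <-]; exists (c *: a + b); rewrite f_lin.
Qed.

End KlinearMaps.

Section Derivations.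
Variable K : fieldType.
Implicit Types (p q : {poly K}) (D : {poly K} -> {poly K}).

Lemma deriv_surjective : [pchar K] =i pred0 -> forall q, exists p, p^`() = q.
Proof.
move=> /pcharf0P natf0 q.
exists (\poly_(i < (size q).+1) (if i is j.+1 then q`_j / j.+1%:R else 0)).
apply/polyP => i; rewrite coef_deriv coef_poly ltnS.
case: ltnP => iq; last by rewrite mul0rn nth_default.
by rewrite -[_ *+ i.+1]mulr_natr divfK // natf0.
Qed.

Lemma Kderivation_derivE D : is_Kderivation D -> forall p, D p = p^`() * D 'X.
Proof.
case=> Dlin DM.
have D1 : D 1 = 0.
  by apply: (addrI (D 1)); have := DM 1 1; rewrite !(mulr1, mul1r) addr0 => <-.
have DC c : D c%:P = 0 by rewrite -alg_polyC poly_KlinearZ // D1 scaler0.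
elim/poly_ind => [|p c IH]; first by rewrite poly_Klinear0 // deriv0 mul0r.
by rewrite poly_KlinearD // DM DC IH derivD derivM derivX derivC; ring.
Qed.

Lemma Kderivation_image_mulr D : [pchar K] =i pred0 -> is_Kderivation D ->
  forall a b, image_of D a -> image_of D (a * b).
Proof.
move=> charK0 Dder a b [q <-]; have [p pE] := deriv_surjective charK0 (q^`() * b).
by exists p; rewrite !(Kderivation_derivE Dder p) (Kderivation_derivE Dder q) pE mulrAC.
Qed.

Lemma KEderivation_cases D : is_KEderivation D ->
  (forall p, D p = p) \/ (forall p, D p = p - (p \Po ('X - D 'X))).
Proof.
case=> Dlin DM; pose phi p := p - D p.
have phiM p q : phi (p * q) = phi p * phi q by rewrite /phi DM; ring.
have phiD p q : phi (p + q) = phi p + phi q by rewrite /phi poly_KlinearD //; ring.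
have phiZ c p : phi (c *: p) = c *: phi p by rewrite /phi poly_KlinearZ // scalerBr.
have [phi1|phi1] : phi 1 = 0 \/ phi 1 = 1.
  have : phi 1 * (phi 1 - 1) = 0 by rewrite mulrBr mulr1 -phiM mul1r subrr.
  move/eqP; rewrite mulf_eq0 => /orP[/eqP ->|]; first by left.
  by rewrite subr_eq0 => /eqP ->; right.
  left=> p; have : phi p = 0 by rewrite -[p]mulr1 phiM phi1 mulr0.
  by move/eqP; rewrite subr_eq0 => /eqP.
right; have phiE p : phi p = p \Po ('X - D 'X).
  elim/poly_ind: p => [|p c IH]; first by rewrite /phi poly_Klinear0 // subrr comp_poly0.
  by rewrite phiD phiM IH comp_poly_MXaddC -alg_polyC phiZ phi1.
by move=> p; rewrite -phiE /phi opprB addrC subrK.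
Qed.

End Derivations.

Section DiffComp.
Variable K : fieldType.
Implicit Types (h p q v w : {poly K}) (lam mu c : K).

Definition im_diff_comp h := image_of (fun q => q - (q \Po h)).

Lemma im_diff_comp0 h : im_diff_comp h 0.
Proof. by exists 0; rewrite comp_poly0 subrr. Qed.

Lemma coef_comp_scaleX p c k : (p \Po (c *: 'X))`_k = c ^+ k * p`_k.
Proof.
elim/poly_ind: p k => [|p d IH] k; first by rewrite comp_poly0 !coef0 mulr0.
rewrite comp_poly_MXaddC -scalerAr !coefD coefZ !coefMX !coefC IH.
by case: k => [|k] /=; rewrite ?mulr0 ?add0r ?expr0 ?mul1r ?addr0 // exprS mulrA.
Qed.

Lemma im_diff_comp_scaleX lam w :
  im_diff_comp (lam *: 'X) w <-> (forall k, lam ^+ k = 1 -> w`_k = 0).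
Proof.
split=> [[q <-] k lk|w0]; first by rewrite coefB coef_comp_scaleX lk mul1r subrr.
exists (\poly_(k < size w) (w`_k / (1 - lam ^+ k))).
apply/polyP => k; rewrite coefB coef_comp_scaleX coef_poly.
case: (ltnP k (size w)) => kw; last by rewrite mulr0 subrr nth_default.
have [lk|lk] := eqVneq (lam ^+ k) 1.
  by rewrite lk subrr invr0 !mulr0 subr0 w0.
by field; rewrite subr_eq0 eq_sym.
Qed.

Lemma mathieu_im_diff_comp_scaleX lam : mathieu_cond (im_diff_comp (lam *: 'X)).
Proof.
case: (classic (exists2 k, (0 < k)%N & lam ^+ k = 1)) => [[k k0 lk]|no_root].
  apply: mathieu_cond_nil => [|a /(_ k k0) /im_diff_comp_scaleX ak0].
    exact: im_diff_comp0.
  (* deg (a ^+ k) = k * deg a, and lam ^+ (k * deg a) = 1 *)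
  have : lead_coef (a ^+ k) = 0.
    by rewrite /lead_coef size_exp ak0 // mulnC exprM lk expr1n.
  by rewrite lead_coef_exp => /eqP; rewrite expf_eq0 lead_coef_eq0 k0 => /eqP.
apply: mathieu_cond_ideal => a b /im_diff_comp_scaleX a0.
apply/im_diff_comp_scaleX => k lk.
have -> : k = 0%N by case: k lk => // k lk; case: no_root; exists k.+1.
by rewrite coef0M a0 ?mul0r.
Qed.

Lemma im_diff_comp_conj lam mu x0 : lam * x0 + mu = x0 -> forall v,
  im_diff_comp (lam *: 'X + mu%:P) v <->
  im_diff_comp (lam *: 'X) (v \Po ('X + x0%:P)).
Proof.
move=> fix_x0 v; set s := 'X + x0%:P.
have conj_s : (lam *: 'X + mu%:P) \Po s = s \Po (lam *: 'X).
  rewrite /s !comp_polyD comp_polyZ !comp_polyX !comp_polyC scalerDr -addrA.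
  by rewrite -[lam *: x0%:P]mul_polyC -polyCM -polyCD fix_x0.
have comp_s q : (q - (q \Po (lam *: 'X + mu%:P))) \Po s =
                (q \Po s) - ((q \Po s) \Po (lam *: 'X)).
  by rewrite comp_polyB -!comp_polyA conj_s.
have sK p : (p \Po ('X - x0%:P)) \Po s = p.
  by have := comp_polyXaddC_K p (- x0); rewrite polyCN opprK.
split=> [[q <-]|[q qE]]; first by exists (q \Po s); rewrite comp_s.
exists (q \Po ('X - x0%:P)).
by rewrite -[LHS](comp_polyXaddC_K _ x0) -/s comp_s sK qE comp_polyXaddC_K.
Qed.

Lemma size_exp_XaddC c n : size (('X + c%:P) ^+ n) = n.+1.
Proof. by rewrite -[c]opprK polyCN size_exp_XsubC. Qed.

Lemma lead_coef_exp_XaddC c n : (('X + c%:P) ^+ n)`_n = 1.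
Proof.
by have := monicP (monic_exp n (monicXaddC c)); rewrite /lead_coef size_exp_XaddC.
Qed.

Lemma coef_XaddC_exp c n : (('X + c%:P) ^+ n.+1)`_n = c *+ n.+1.
Proof.
elim: n => [|n IH]; first by rewrite expr1 coefD coefX coefC add0r.
by rewrite exprS mulrDl coefD coefXM coefCM /= IH lead_coef_exp_XaddC mulr1 -mulrSr.
Qed.

Lemma im_diff_comp_translate mu : [pchar K] =i pred0 -> mu != 0 ->
  forall w, im_diff_comp ('X + mu%:P) w.
Proof.
move=> /pcharf0P natf0 mu0; set t := 'X + mu%:P.
suff im_size n w : (size w <= n)%N -> im_diff_comp t w by move=> w; exact: im_size.
elim: n w => [|n IH] w sw.
  by move: sw; rewrite size_poly_leq0 => /eqP ->; exact: im_diff_comp0.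
set P := 'X^(n.+1) - ('X^(n.+1) \Po t).
have coefP j : (n < j)%N -> P`_j = 0.
  move=> nj; rewrite /P comp_Xn_poly coefB coefXn.
  have [->|jn] := eqVneq j n.+1; first by rewrite /t lead_coef_exp_XaddC subrr.
  by rewrite nth_default ?subr0 // /t size_exp_XaddC ltn_neqAle eq_sym jn.
have Pn : P`_n = - (mu *+ n.+1).
  by rewrite /P comp_Xn_poly coefB coefXn eqn_leq ltnn andbF coef_XaddC_exp sub0r.
have Pn0 : P`_n != 0 by rewrite Pn oppr_eq0 -mulr_natr mulf_neq0 ?natf0.
have [|q qE] := IH (w - (w`_n / P`_n) *: P).
  apply/leq_sizeP => j nj; rewrite coefB coefZ.
  case: (ltngtP n j) nj => // [nj _|<- _]; last by rewrite divfK ?subrr.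
  by rewrite (coefP j nj) (leq_sizeP _ _ sw j nj) mulr0 subr0.
exists (q + (w`_n / P`_n) *: 'X^(n.+1)).
by rewrite comp_polyD comp_polyZ opprD addrACA -scalerBr qE subrK.
Qed.

Definition comp_iter h n := iter n (comp_poly h) 'X.

Lemma comp_iterSr h n : comp_iter h n.+1 = h \Po comp_iter h n.
Proof.
elim: n => [|n IH]; first by rewrite /= comp_polyXr comp_polyX.
by rewrite -[LHS]/(comp_iter h n.+1 \Po h) [in LHS]IH -comp_polyA.
Qed.

Lemma size_comp_iter h n : (size (comp_iter h n)).-1 = ((size h).-1 ^ n)%N.
Proof.
elim: n => [|n IH]; first by rewrite size_polyX.
by rewrite [comp_iter _ _]/= size_comp_poly IH expnS mulnC.
Qed.

Lemma sum_diff_comp_iter h q n :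
  \sum_(i < n) ((q - (q \Po h)) \Po comp_iter h i) = q - (q \Po comp_iter h n).
Proof.
elim: n => [|n IH]; first by rewrite big_ord0 comp_polyXr subrr.
by rewrite big_ord_recr /= IH comp_polyB -comp_polyA -comp_iterSr addrA subrK.
Qed.

Lemma dvdp_sub_comp q h : (h - 'X) %| (q \Po h) - q.
Proof.
elim/poly_ind: q => [|q c IH]; first by rewrite comp_poly0 subrr dvdp0.
have -> : ((q * 'X + c%:P) \Po h) - (q * 'X + c%:P) =
          ((q \Po h) - q) * h + q * (h - 'X).
  by rewrite comp_poly_MXaddC; ring.
by apply: dvdp_add; [exact: dvdp_mulr | exact: dvdp_mull (dvdpp _)].
Qed.

Lemma in_qpoly_eq0 M p : M \is monic -> (1 < size M)%N ->
  (in_qpoly M p == 0) = (M %| p).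
Proof.
move=> monM sM; have mkM : mk_monic M = M by rewrite /mk_monic sM monM.
by rewrite -val_eqE /= mkM dvdpE.
Qed.

Lemma dvdp_exp_comp_iter h a n : [pchar K] =i pred0 ->
  (forall m, (1 <= m)%N -> im_diff_comp h (a ^+ m)) ->
  (0 < n)%N -> (2 < size (comp_iter h n))%N ->
  (comp_iter h n - 'X) %| a ^+ n.
Proof.
move=> /pcharf0P natf0 Va n0 sH; set g := comp_iter h n - 'X.
have sg : size g = size (comp_iter h n) by rewrite size_polyDl // size_polyN size_polyX.
have lc0 : lead_coef g != 0 by rewrite lead_coef_eq0 -size_poly_gt0 sg ltnW // ltnW.
set M := (lead_coef g)^-1 *: g.
have monM : M \is monic by rewrite monicE lead_coefZ mulVf.
have sM : (1 < size M)%N by rewrite size_scale ?invr_eq0 // sg ltnW.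
have dvdM p : (M %| p) = (g %| p) by rewrite dvdpZl ?invr_eq0.
pose r := [seq in_qpoly M (a \Po comp_iter h i) | i <- iota 0 n].
have psum0 m : (0 < m <= size r)%N -> \sum_(b <- r) b ^+ m = 0.
  case/andP=> m0 _; have [q qE] := Va m m0.
  rewrite big_map (eq_bigr (fun i => in_qpoly M ((a ^+ m) \Po comp_iter h i))).
    apply/eqP; rewrite -rmorph_sum in_qpoly_eq0 // dvdM.
    rewrite -{1}[n]subn0 -/(index_iota 0 n) big_mkord -qE sum_diff_comp_iter.
    by rewrite -dvdpNr opprB dvdp_sub_comp.
  by move=> i _; rewrite !rmorphXn.
have nreg k : (0 < k <= size r)%N -> GRing.lreg (k%:R : {poly %/ M}).
  case/andP=> k0 _ x y; rewrite /= !mulr_natl -!scaler_nat.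
  by apply: scalerI; rewrite natf0 -lt0n.
have ra : in_qpoly M a \in r.
  by apply/mapP; exists 0%N; rewrite ?mem_iota //= comp_polyXr.
have := nilpotent_of_power_sums_eq0 nreg psum0 ra.
by rewrite size_map size_iota -rmorphXn => /eqP; rewrite in_qpoly_eq0 // dvdM.
Qed.

Lemma exists_lt_exp2 d : exists2 n, (0 < n)%N & (d * n < 2 ^ n)%N.
Proof. (* n := 4 (d + 1), since 2 ^ n = (2 ^ (d + 1)) ^ 4 >= (d + 2) ^ 4 *)
exists (d.+1 * 4)%N => //; rewrite expnM.
have := ltn_expl d.+1 (isT : (1 < 2)%N); move: (2 ^ d.+1)%N => e de.
have : (d.+2 ^ 4 <= e ^ 4)%N by rewrite leq_exp2r.
by apply: leq_trans; nia.
Qed.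

Lemma im_diff_comp_powers_eq0 h a : [pchar K] =i pred0 -> (2 < size h)%N ->
  (forall m, (1 <= m)%N -> im_diff_comp h (a ^+ m)) -> a = 0.
Proof.
move=> charK0 sh Va; apply/eqP/negPn/negP => a0.
have [n n0 small_n] := exists_lt_exp2 (size a).-1.
have sH : (2 ^ n < size (comp_iter h n))%N.
  have le2e : (2 ^ n <= (size h).-1 ^ n)%N by rewrite leq_exp2r //; lia.
  have := size_comp_iter h n; case: (size (comp_iter h n)) => [|s] /= sE.
    by move: le2e; rewrite -sE leqn0 expn_eq0.
  by rewrite ltnS sE.
have sH2 : (2 < size (comp_iter h n))%N.
  by apply: leq_ltn_trans sH; rewrite -{1}(expn1 2) leq_exp2l.
have := dvdp_leq (expf_neq0 n a0) (dvdp_exp_comp_iter charK0 Va n0 sH2).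
rewrite size_polyDl ?size_polyN ?size_polyX //.
move: (size_exp a n) sH small_n.
by move: (2 ^ n)%N (size (comp_iter h n)) (size (a ^+ n)) ((size a).-1 * n)%N; lia.
Qed.

Lemma mathieu_im_diff_comp h : [pchar K] =i pred0 -> mathieu_cond (im_diff_comp h).
Proof.
move=> charK0; have [sh|sh] := ltnP 2 (size h).
  apply: mathieu_cond_nil => [|a]; first exact: im_diff_comp0.
  exact: im_diff_comp_powers_eq0.
have -> : h = h`_1 *: 'X + (h`_0)%:P.
  apply/polyP => i; rewrite coefD coefZ coefX coefC.
  case: i => [|[|i]] /=; rewrite ?mulr0 ?add0r ?addr0 ?mulr1 //.
  by rewrite nth_default // (leq_trans sh).
move: (h`_1) (h`_0) => lam mu.
have [[x0 fix_x0]|[-> mu0]] : (exists x0, lam * x0 + mu = x0) \/ (lam = 1 /\ mu != 0).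
  have [->|lam1] := eqVneq lam 1; last first.
    by left; exists (mu / (1 - lam)); field; rewrite subr_eq0 eq_sym.
  by have [->|mu0] := eqVneq mu 0; [left; exists 0; rewrite mulr0 addr0 | right].
  apply: (@mathieu_cond_rmorph _ _ (comp_poly ('X + x0%:P))).
    exact: im_diff_comp_conj fix_x0.
  exact: mathieu_im_diff_comp_scaleX.
apply: mathieu_cond_ideal => a b _; rewrite scale1r.
exact: im_diff_comp_translate.
Qed.

End DiffComp.

Theorem theorem1p5 (K : fieldType) (charK0 : [pchar K] =i pred0)
  (delta : {poly K} -> {poly K}) :
  is_Kderivation delta \/ is_KEderivation delta ->
  is_Mathieu_subspace (image_of delta).
Proof.
move=> delta_der; have delta_lin : poly_Klinear delta by case: delta_der => -[].
split; first exact: image_of_Ksubspace.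
change (mathieu_cond (image_of delta)).
case: delta_der => [Dder | /KEderivation_cases [deltaE | deltaE]].
- exact/mathieu_cond_ideal/Kderivation_image_mulr.
- by apply: mathieu_cond_ideal => a b _; exists (a * b).
- apply: (@mathieu_cond_rmorph _ _ idfun _ (im_diff_comp ('X - delta 'X))).
    by move=> v /=; split=> -[q <-]; exists q; rewrite (deltaE q).
  exact: mathieu_im_diff_comp.
Qed.
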